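(* In the setting of the context, let $\mu^*\in W_1$. Given $n\ge1$ and $\alpha\in\mathcal{I}_n(f_{\mu^*})$, there exist $c=c(\alpha)>0$ and $\delta=\delta(\alpha)>0$ such that for every $\mu$ with $\|\mu-\mu^*\|<\delta$ (and $\|\mu-\mu^*\|<1$) we have $\alpha\in\mathcal{I}_n(f_\mu)$ and $d_H(A^\alpha_\mu,A^\alpha_{\mu^*})\le c\|\mu-\mu^*\|$.
   Context: $X\subset\mathbb{R}^d$ is a compact convex polytope (possibly not full-dimensional) with relative interior $\mathrm{relint}(X)$. $\ell\ge1$, $\mathcal{A}=\{-1,1\}^\ell$, $\varphi_i(x)=\Lambda_ix+b_i$ ($i\in\mathcal{A}$) with $\Lambda_i\in GL_d(\mathbb{R})$, $\|\Lambda_i\|<1$ in some operator norm, and $\varphi_i(X)\subset\mathrm{relint}(X)$. $v^{(1)},\dots,v^{(\ell)}$ are unit vectors in $\mathbb{R}^d$, $H_j(\mu)=\{x:\langle v^{(j)},x\rangle=\mu_j\}$. Label map: $\sigma_\mu(x)=(s_1(x),\dots,s_\ell(x))$, $s_j(x)=-1$ if $\langle v^{(j)},x\rangle\le\mu_j$ and $1$ otherwise; $f_\mu(x)=\varphi_{\sigma_\mu(x)}(x)$ on $X$. $A_{i,\mu}=\mathrm{relint}(X)\cap\mathrm{relint}(\{x\in X:\sigma_\mu(x)=i\})$. For $\alpha=(i_0,\dots,i_{n-1})$: $A^\alpha_\mu=A_{i_0,\mu}\cap\varphi_{i_0}^{-1}(A_{i_1,\mu})\cap\cdots\cap(\varphi_{i_{n-2}}\circ\cdots\circ\varphi_{i_0})^{-1}(A_{i_{n-1},\mu})$.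 $\mathcal{I}_n(f_\mu)=\{\alpha\in\mathcal{A}^n:A^\alpha_\mu\ne\emptyset\}$ (the itineraries of order $n$). $Z_\alpha=\{\mu\in\mathbb{R}^\ell:A^\alpha_\mu\neq\emptyset\}$ and $W_1=\mathbb{R}^\ell\setminus\bigcup_{n\ge1}\bigcup_{\alpha\in\mathcal{A}^n}\partial Z_\alpha$. $d_H$ is the Hausdorff distance (with respect to the Euclidean metric). *)

From HB Require Import structures.
From mathcomp Require Import all_boot all_order all_algebra.
From mathcomp Require Import all_classical all_reals all_analysis.
Set Implicit Arguments. Unset Strict Implicit. Unset Printing Implicit Defensive.
Import Order.TTheory GRing.Theory Num.Theory.
Local Open Scope classical_set_scope.
Local Open Scope ring_scope.

Section IFSDefs.
Variable R : realType.

Definition inner (d : nat) (u x : 'cV[R]_d) : R := \sum_(k < d) u k 0 * x k 0.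
Definition enorm (d : nat) (x : 'cV[R]_d) : R := Num.sqrt (\sum_(k < d) x k 0 ^+ 2).

Definition conv_hull (d m : nat) (p : 'I_m -> 'cV[R]_d) : set 'cV[R]_d :=
  [set x | exists w : 'I_m -> R, (forall k, 0 <= w k) /\ \sum_(k < m) w k = 1 /\
     x = \sum_(k < m) w k *: p k].

Definition is_polytope (d : nat) (X : set 'cV[R]_d) : Prop :=
  exists (m : nat) (p : 'I_m -> 'cV[R]_d), (0 < m)%N /\ X = conv_hull p.

Definition aff_hull (d : nat) (S : set 'cV[R]_d) : set 'cV[R]_d :=
  [set x | exists (m : nat) (p : 'I_m -> 'cV[R]_d) (w : 'I_m -> R),
     (forall k, S (p k)) /\ \sum_(k < m) w k = 1 /\ x = \sum_(k < m) w k *: p k].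

Definition relint (d : nat) (S : set 'cV[R]_d) : set 'cV[R]_d :=
  [set x | S x /\ exists e : R, 0 < e /\
     forall y, aff_hull S y -> enorm (y - x) < e -> S y].

Definition is_norm (d : nat) (N : 'cV[R]_d -> R) : Prop :=
  (forall x, 0 <= N x) /\ (forall x, N x = 0 -> x = 0) /\
  (forall (a : R) x, N (a *: x) = `|a| * N x) /\
  (forall x y, N (x + y) <= N x + N y).

Definition opnorm (d : nat) (N : 'cV[R]_d -> R) (L : 'M[R]_d) : \bar R :=
  ereal_sup [set (N (L *m x))%:E | x in [set x | N x <= 1]].

Definition hausdorff (d : nat) (A B : set 'cV[R]_d) : \bar R :=
  Order.max
    (ereal_sup [set ereal_inf [set (enorm (a - b))%:E | b in B] | a in A])
    (ereal_sup [set ereal_inf [set (enorm (a - b))%:E | a in A] | b in B]).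

Definition boundary (l : nat) (Z : set 'cV[R]_l) : set 'cV[R]_l :=
  [set mu | forall e : R, 0 < e ->
     (exists nu, Z nu /\ enorm (nu - mu) < e) /\
     (exists nu, ~ Z nu /\ enorm (nu - mu) < e)].

(* Labels: A = {-1,1}^l, encoded as {ffun 'I_l -> bool}, true = 1, false = -1. *)
Definition label (l : nat) := {ffun 'I_l -> bool}.

Variables (d l : nat).
Variables (X : set 'cV[R]_d) (Lam : label l -> 'M[R]_d) (b : label l -> 'cV[R]_d)
          (v : 'I_l -> 'cV[R]_d).

Definition phi (i : label l) (x : 'cV[R]_d) : 'cV[R]_d := Lam i *m x + b i.

Definition sigma (mu : 'cV[R]_l) (x : 'cV[R]_d) : label l :=
  [ffun j => (mu j 0 < inner (v j) x)%R].

Definition Aset (mu : 'cV[R]_l) (i : label l) : set 'cV[R]_d :=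
  relint X `&` relint [set x | X x /\ sigma mu x = i].

Definition comp_phi (s : seq (label l)) (x : 'cV[R]_d) : 'cV[R]_d :=
  foldl (fun y i => phi i y) x s.

Definition Aalpha (mu : 'cV[R]_l) (n : nat) (alpha : n.-tuple (label l)) : set 'cV[R]_d :=
  [set x | forall k : 'I_n,
     Aset mu (tnth alpha k) (comp_phi (take k alpha) x)].

Definition itin (mu : 'cV[R]_l) (n : nat) : set (n.-tuple (label l)) :=
  [set alpha | Aalpha mu alpha !=set0].

Definition Zset (n : nat) (alpha : n.-tuple (label l)) : set 'cV[R]_l :=
  [set mu | Aalpha mu alpha !=set0].

Definition W1 : set 'cV[R]_l :=
  [set mu | forall (n : nat) (alpha : n.-tuple (label l)), (0 < n)%N ->
     ~ boundary (Zset alpha) mu].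

End IFSDefs.

From HB Require Import structures.
From mathcomp Require Import all_boot all_order all_algebra.
From mathcomp Require Import all_classical all_reals all_analysis.
From mathcomp Require Import ring lra.
Import Order.TTheory GRing.Theory Num.Theory.
Local Open Scope classical_set_scope.
Local Open Scope ring_scope.
Set Implicit Arguments. Unset Strict Implicit. Unset Printing Implicit Defensive.

(* The cells are cut out by affine conditions along affine orbits, so relaxing them to
   "orbit in X, non-strict sign conditions" gives a set whose graph in (mu, x) is convex;
   and moving from a point of that weak cell towards a point of A^alpha_mu lands in
   A^alpha_mu at once.  As mu* is not on the boundary of Z_alpha, a ball of radius 2r
   around mu* lies in Z_alpha.  For |mu - mu*| < r, write the target parameter as
   (1 - s) (source parameter) + s q with q in that ball and s = |mu - mu*| / r: averaging
   a point of the source cell with a point of A^alpha_q gives a weak point of the target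
   cell within s diam(X), so d_H <= (diam(X) / r) |mu - mu*|. *)

Section EuclideanNorm.
Variables (R : realType) (d : nat).
Implicit Types x y : 'cV[R]_d.

Lemma inner_self_ge0 x : 0 <= inner x x.
Proof. by apply: sumr_ge0 => k _; rewrite -expr2 sqr_ge0. Qed.

Lemma enormE x : enorm x = Num.sqrt (inner x x).
Proof. by rewrite /enorm /inner; under eq_bigr do rewrite expr2. Qed.

Lemma enorm_ge0 x : 0 <= enorm x.
Proof. exact: sqrtr_ge0. Qed.

Lemma enormZ (a : R) x : enorm (a *: x) = `|a| * enorm x.
Proof.
rewrite /enorm -sqrtr_sqr -sqrtrM ?sqr_ge0 // mulr_sumr.
by congr Num.sqrt; apply: eq_bigr => k _; rewrite mxE exprMn.
Qed.

Lemma enorm0 : enorm (0 : 'cV[R]_d) = 0.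
Proof. by rewrite -(scale0r 0) enormZ normr0 mul0r. Qed.

Lemma enorm_eq0 x : enorm x = 0 -> x = 0.
Proof.
move=> /eqP; rewrite enormE sqrtr_eq0 => x0.
have xx0 : inner x x = 0 by apply/eqP; rewrite eq_le x0 inner_self_ge0.
apply/matrixP => i j; rewrite ord1 mxE.
have /eqP : x i 0 * x i 0 = 0.
  by apply: (psumr_eq0P _ xx0) => // k _; rewrite -expr2 sqr_ge0.
by rewrite mulf_eq0 orbb => /eqP.
Qed.

Lemma enormN x : enorm (- x) = enorm x.
Proof. by rewrite -scaleN1r enormZ normrN normr1 mul1r. Qed.

Lemma enorm_distC x y : enorm (x - y) = enorm (y - x).
Proof. by rewrite -enormN opprB. Qed.

Lemma enorm_sqr x : enorm x ^+ 2 = inner x x.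
Proof. by rewrite enormE sqr_sqrtr // inner_self_ge0. Qed.

(* Lagrange's identity: twice the defect is the sum of the squares (x_i y_j - x_j y_i)^2. *)
Lemma inner_sqr_le x y : inner x y ^+ 2 <= inner x x * inner y y.
Proof.
pose a i := x i 0; pose b i := y i 0.
pose g (i j : 'I_d) := a i * a i * (b j * b j) - a i * b i * (a j * b j).
rewrite -subr_ge0; have -> : inner x x * inner y y - inner x y ^+ 2 = \sum_i \sum_j g i j.
  by rewrite expr2 !big_distrlr -sumrB; apply: eq_bigr => i _; rewrite -sumrB.
suff : 0 <= \sum_i \sum_j g i j + \sum_i \sum_j g i j by lra.
rewrite {2}exchange_big -big_split; apply: sumr_ge0 => i _.
rewrite -big_split; apply: sumr_ge0 => j _ /=.
have := sqr_ge0 (a i * b j - a j * b i); rewrite /g; nra.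
Qed.

Lemma inner_le_enorm x y : inner x y <= enorm x * enorm y.
Proof.
rewrite !enormE -sqrtrM ?inner_self_ge0 //; apply: le_trans (ler_norm _) _.
by rewrite -sqrtr_sqr ler_sqrt ?mulr_ge0 ?inner_self_ge0 // inner_sqr_le.
Qed.

Lemma enormD x y : enorm (x + y) <= enorm x + enorm y.
Proof.
rewrite enormE -(ger0_norm (addr_ge0 (enorm_ge0 x) (enorm_ge0 y))) -sqrtr_sqr.
rewrite ler_sqrt ?sqr_ge0 // sqrrD !enorm_sqr.
have -> : inner (x + y) (x + y) = inner x x + 2 * inner x y + inner y y.
  rewrite /inner mulr_sumr -!big_split; apply: eq_bigr => k _ /=; rewrite !mxE; ring.
have := inner_le_enorm x y; lra.
Qed.

End EuclideanNorm.

Section AffineHull.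
Variables (R : realType) (d : nat).
Implicit Types (C : set 'cV[R]_d) (x y q r w : 'cV[R]_d).

Lemma sub_aff_hull C : C `<=` aff_hull C.
Proof.
move=> x Cx; exists 1%N, (fun _ => x), (fun _ => 1).
by rewrite !big_ord1 scale1r.
Qed.

Lemma split_lshift m n (i : 'I_m) : fintype.split (lshift n i) = inl i.
Proof. exact: (unsplitK (inl _ i)). Qed.

Lemma split_rshift m n (j : 'I_n) : fintype.split (rshift m j) = inr j.
Proof. exact: (unsplitK (inr _ j)). Qed.

Lemma aff_hull_comb C x y (a c : R) :
  aff_hull C x -> aff_hull C y -> a + c = 1 -> aff_hull C (a *: x + c *: y).
Proof.
move=> [m [p [w [Cp [w1 ->]]]]] [m' [p' [w' [Cp' [w1' ->]]]]] ac1.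
pose join T (f : 'I_m -> T) (g : 'I_m' -> T) k :=
  match fintype.split k with inl i => f i | inr j => g j end.
exists (m + m')%N, (join _ p p'), (join _ (fun i => a * w i) (fun j => c * w' j)).
split; first by move=> k; rewrite /join; case: (fintype.split k).
rewrite !big_split_ord /join /=.
under eq_bigr do rewrite split_lshift.
under [X in _ + X]eq_bigr do rewrite split_rshift.
under [X in _ = X + _]eq_bigr do rewrite split_lshift.
under [X in _ = _ + X]eq_bigr do rewrite split_rshift.
rewrite -!mulr_sumr w1 w1' !mulr1 !scaler_sumr; split => //.
by congr (_ + _); apply: eq_bigr => k _; rewrite scalerA.
Qed.

(* The homothety of centre q and ratio 1/s maps a neighbourhood of (1 - s) q + s r onto one of r. *)
Lemma relint_segment C q r :
  relint C r ->
  (forall (s : R) r', 0 < s <= 1 -> C r' -> C ((1 - s) *: q + s *: r')) ->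
  forall s : R, 0 < s <= 1 -> relint C ((1 - s) *: q + s *: r).
Proof.
move=> [Cr [e [e0 ball_r]]] segC s /andP[s0 s1].
split; first by apply: segC => //; rewrite s0 s1.
have affq : aff_hull C q.
  have Cmid : C ((1 - 2^-1) *: q + 2^-1 *: r).
    by apply: segC => //; rewrite invr_gt0 invf_le1 //; lra.
  have -> : q = 2 *: ((1 - 2^-1) *: q + 2^-1 *: r) + (-1) *: r.
    by apply/matrixP => i j; rewrite !mxE; field.
  by apply: aff_hull_comb; [exact: sub_aff_hull | exact: sub_aff_hull | lra].
exists (s * e); split; first exact: mulr_gt0.
move=> w affw near_w.
have sn0 : s != 0 by rewrite gt_eqF.
pose r' := s^-1 *: w + (1 - s^-1) *: q.
have -> : w = (1 - s) *: q + s *: r'.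
  by apply/matrixP => i j; rewrite !mxE; field.
apply: segC; first by rewrite s0 s1.
apply: ball_r; first by apply: aff_hull_comb => //; lra.
have -> : r' - r = s^-1 *: (w - ((1 - s) *: q + s *: r)).
  by apply/matrixP => i j; rewrite !mxE; field.
by rewrite enormZ ger0_norm ?invr_ge0 ?ltW // ltr_pdivrMl // mulrC.
Qed.

End AffineHull.

Section Polytope.
Variables (R : realType) (d : nat) (X : set 'cV[R]_d).
Hypothesis polyX : is_polytope X.

Lemma polytope_convex x z (t : R) :
  X x -> X z -> 0 <= t <= 1 -> X ((1 - t) *: x + t *: z).
Proof.
case: polyX => m [p [_ ->]] [w [w0 [w1 ->]]] [w' [w0' [w1' ->]]] /andP[t0 t1].
exists (fun k => (1 - t) * w k + t * w' k); split.
  by move=> k; rewrite addr_ge0 ?mulr_ge0 // subr_ge0.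
rewrite big_split /= -!mulr_sumr w1 w1' !mulr1 subrK; split => //.
by rewrite !scaler_sumr -big_split; apply: eq_bigr => k _; rewrite [RHS]scalerDl !scalerA.
Qed.

Lemma enorm_sum m (f : 'I_m -> 'cV[R]_d) :
  enorm (\sum_(k < m) f k) <= \sum_(k < m) enorm (f k).
Proof.
elim/big_rec2: _ => [|k s y _ IH]; first by rewrite enorm0.
by apply: le_trans (enormD _ _) _; rewrite lerD2l.
Qed.

Lemma polytope_diam_bound :
  exists2 D : R, 0 < D & forall x z, X x -> X z -> enorm (x - z) <= D.
Proof.
case: polyX => m [p [_ ->]].
pose M := \sum_(k < m) enorm (p k).
have bound x : conv_hull p x -> enorm x <= M.
  move=> [w [w0 [w1 ->]]]; apply: le_trans (enorm_sum _) _; apply: ler_sum => k _.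
  rewrite enormZ ger0_norm // ler_piMl ?enorm_ge0 //.
  by rewrite -w1 (bigD1 k) //= lerDl sumr_ge0.
exists (M + M + 1) => [|x z Xx Xz].
  have : 0 <= M by apply: sumr_ge0 => k _; exact: enorm_ge0.
  lra.
apply: le_trans (enormD _ _) _; rewrite enormN.
by have := bound x Xx; have := bound z Xz; lra.
Qed.

End Polytope.

Section AffineMaps.
Variables (R : realType) (d l : nat).
Variables (Lam : label l -> 'M[R]_d) (b : label l -> 'cV[R]_d).

Lemma phi_comb i x z (t : R) :
  phi Lam b i ((1 - t) *: x + t *: z) = (1 - t) *: phi Lam b i x + t *: phi Lam b i z.
Proof.
by rewrite /phi mulmxDr -!scalemxAr !scalerDr addrACA -scalerDl subrK scale1r.
Qed.

Lemma comp_phi_comb s x z (t : R) :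
  comp_phi Lam b s ((1 - t) *: x + t *: z) =
  (1 - t) *: comp_phi Lam b s x + t *: comp_phi Lam b s z.
Proof. by elim: s x z => [//|i s IH] x z /=; rewrite phi_comb IH. Qed.

End AffineMaps.

Lemma inner_comb (R : realType) (d : nat) (u x z : 'cV[R]_d) (t : R) :
  inner u ((1 - t) *: x + t *: z) = (1 - t) * inner u x + t * inner u z.
Proof.
by rewrite /inner !mulr_sumr -big_split; apply: eq_bigr => k _ /=; rewrite !mxE; ring.
Qed.

Section Labels.
Variables (R : realType) (d l : nat) (v : 'I_l -> 'cV[R]_d).
Implicit Types (mu : 'cV[R]_l) (i : label l) (x q r : 'cV[R]_d).

Definition sign_le mu i x : Prop :=
  forall j, if i j then mu j 0 <= inner (v j) x else inner (v j) x <= mu j 0.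

Lemma sigma_sign_le mu x : sign_le mu (sigma v mu x) x.
Proof. by move=> j; rewrite ffunE; case: ltP => // /ltW. Qed.

Lemma sign_le_comb mu1 mu2 i x z (t : R) :
  sign_le mu1 i x -> sign_le mu2 i z -> 0 <= t <= 1 ->
  sign_le ((1 - t) *: mu1 + t *: mu2) i ((1 - t) *: x + t *: z).
Proof.
move=> le1 le2 /andP[t0 t1] j; rewrite inner_comb !mxE.
by move: (le1 j) (le2 j); case: (i j) => h1 h2; nra.
Qed.

Lemma sigma_segment mu q r (s : R) :
  sign_le mu (sigma v mu r) q -> 0 < s <= 1 ->
  sigma v mu ((1 - s) *: q + s *: r) = sigma v mu r.
Proof.
move=> le_q /andP[s0 s1]; apply/ffunP => j; move: (le_q j).
rewrite !ffunE inner_comb; case: (ltP (mu j 0) (inner (v j) r)) => hr hq.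
- by apply/idP; nra.
- by apply/negbTE; rewrite -leNgt; nra.
Qed.

End Labels.

Section Hausdorff.
Variables (R : realType) (d : nat).
Implicit Types (A B : set 'cV[R]_d) (x : 'cV[R]_d).

Definition edist x A : \bar R := ereal_inf [set (enorm (x - y))%:E | y in A].

Lemma hausdorff_le A B (C : R) :
  (forall x, A x -> (edist x B <= C%:E)%E) ->
  (forall y, B y -> (edist y A <= C%:E)%E) ->
  (hausdorff A B <= C%:E)%E.
Proof.
move=> AB BA; rewrite /hausdorff ge_max; apply/andP; split;
  apply: ge_ereal_sup => _ [x Sx <-]; first exact: AB.
rewrite (@eq_imagel _ _ _ _ (fun y => (enorm (x - y))%:E)) => [|y _].
  exact: BA.
by rewrite enorm_distC.
Qed.

End Hausdorff.

Section Cells.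
Variables (R : realType) (d l : nat).
Variables (X : set 'cV[R]_d) (Lam : label l -> 'M[R]_d) (b : label l -> 'cV[R]_d)
          (v : 'I_l -> 'cV[R]_d).
Hypothesis polyX : is_polytope X.
Variables (n : nat) (alpha : n.-tuple (label l)).

Local Notation A mu := (Aalpha X Lam b v mu alpha).
Local Notation orbit k x := (comp_phi Lam b (take k alpha) x).

Definition weak_Aalpha (mu : 'cV[R]_l) (x : 'cV[R]_d) : Prop :=
  forall k : 'I_n, X (orbit k x) /\ sign_le v mu (tnth alpha k) (orbit k x).

Lemma Aalpha_sub_weak mu : A mu `<=` weak_Aalpha mu.
Proof.
move=> x Ax k; have [_ [[Xk <-] _]] := Ax k.
by split=> //; exact: sigma_sign_le.
Qed.

Lemma weak_Aalpha_comb mu1 mu2 x z (t : R) :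
  weak_Aalpha mu1 x -> weak_Aalpha mu2 z -> 0 <= t <= 1 ->
  weak_Aalpha ((1 - t) *: mu1 + t *: mu2) ((1 - t) *: x + t *: z).
Proof.
move=> wx wz t01 k; have [Xx lex] := wx k; have [Xz lez] := wz k.
by rewrite comp_phi_comb; split; [exact: polytope_convex | exact: sign_le_comb].
Qed.

Lemma Aalpha_segment mu a p (s : R) :
  A mu a -> weak_Aalpha mu p -> 0 < s <= 1 -> A mu ((1 - s) *: p + s *: a).
Proof.
move=> Aa wp s01 k; have [Xp lep] := wp k; have [relX relS] := Aa k.
have convX t y : 0 < t <= 1 -> X y -> X ((1 - t) *: orbit k p + t *: y).
  by move=> /andP[t0 t1] Xy; apply: polytope_convex => //; rewrite ltW.
rewrite /Aset comp_phi_comb; split; first exact: relint_segment.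
apply: relint_segment relS _ s s01 => t y t01 [Xy sigma_y].
by split; [exact: convX | rewrite sigma_segment ?sigma_y].
Qed.

Lemma edist_Aalpha_le_weak mu x p :
  A mu !=set0 -> weak_Aalpha mu p -> (edist x (A mu) <= (enorm (x - p))%:E)%E.
Proof.
move=> [a Aa] wp; apply/lee_addgt0Pr => eps eps0.
pose D := enorm (p - a).
have D0 : 0 <= D by exact: enorm_ge0.
pose s := Num.min 1 (eps / (D + 1)).
have s0 : 0 < s by rewrite lt_min ltr01 divr_gt0 //; lra.
have s1 : s <= 1 by rewrite ge_min lexx.
have sD : s * D <= eps.
  have : s * (D + 1) <= eps.
    by rewrite -ler_pdivlMr; [rewrite ge_min lexx orbT | lra].
  by rewrite mulrDr mulr1; lra.
apply: le_trans (ereal_inf_lbound _) _.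
  by exists ((1 - s) *: p + s *: a); first by apply: Aalpha_segment; rewrite ?s0.
rewrite -EFinD lee_fin.
have -> : x - ((1 - s) *: p + s *: a) = (x - p) + s *: (p - a).
  by apply/matrixP => i j; rewrite !mxE; ring.
apply: le_trans (enormD _ _) _; rewrite enormZ (ger0_norm (ltW s0)) -/D; lra.
Qed.

Hypothesis n_gt0 : (0 < n)%N.

Lemma Aalpha_sub_X mu : A mu `<=` X.
Proof. by move=> x /(_ (Ordinal n_gt0)) [[Xx _] _]; rewrite take0 in Xx. Qed.

Lemma edist_Aalpha_shift (D r : R) m1 m2 a :
  (forall x z, X x -> X z -> enorm (x - z) <= D) -> 0 < r ->
  (forall q, enorm (q - m1) <= r -> Zset X Lam b v alpha q) ->
  enorm (m2 - m1) <= r -> A m1 a ->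
  (edist a (A m2) <= (D / r * enorm (m2 - m1))%:E)%E.
Proof.
move=> diamX r0 ballZ near_m2 Aa.
set rho := enorm (m2 - m1).
have rho0 : 0 <= rho by exact: enorm_ge0.
pose s := rho / r.
pose q := m1 + (r / rho) *: (m2 - m1).
have s01 : 0 <= s <= 1 by rewrite /s divr_ge0 ?(ltW r0) //= ler_pdivrMr // mul1r.
have m2E : m2 = (1 - s) *: m1 + s *: q.
  have [rho_eq0|rho_neq0] := eqVneq rho 0.
    rewrite /s rho_eq0 mul0r subr0 scale1r scale0r addr0.
    by apply/eqP; rewrite -subr_eq0; apply/eqP/enorm_eq0.
  by apply/matrixP => i j; rewrite !mxE /s; field; rewrite rho_neq0 gt_eqF.
have [z Az] : Zset X Lam b v alpha q.
  apply: ballZ; rewrite /q addrAC subrr add0r enormZ -/rho.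
  have [->|rho_neq0] := eqVneq rho 0; first by rewrite mulr0 ltW.
  by rewrite ger0_norm ?divfK // divr_ge0 // ltW.
apply: (le_trans (@edist_Aalpha_le_weak m2 a ((1 - s) *: a + s *: z) _ _)).
- exact: ballZ.
- by rewrite m2E; apply: weak_Aalpha_comb s01; exact: Aalpha_sub_weak.
rewrite lee_fin.
have -> : a - ((1 - s) *: a + s *: z) = s *: (a - z).
  by apply/matrixP => i j; rewrite !mxE; ring.
rewrite enormZ ger0_norm; last by case/andP: s01.
rewrite (_ : D / r * rho = s * D); last by rewrite /s; ring.
by apply: ler_wpM2l; [case/andP: s01 | exact: diamX (Aalpha_sub_X Aa) (Aalpha_sub_X Az)].
Qed.

End Cells.

Lemma interior_of_not_boundary (R : realType) (l : nat) (Z : set 'cV[R]_l) mu :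
  Z mu -> ~ boundary Z mu -> exists2 e : R, 0 < e & forall nu, enorm (nu - mu) < e -> Z nu.
Proof.
move=> Zmu; apply: contra_notP => no_ball e e0.
split; first by exists mu; rewrite subrr enorm0.
apply: contrapT => no_out; apply: no_ball; exists e => // nu near_nu.
by apply: contrapT => nZ; apply: no_out; exists nu.
Qed.

Theorem lemma5p4 (R : realType) (d l : nat) (X : set 'cV[R]_d)
  (Lam : label l -> 'M[R]_d) (b : label l -> 'cV[R]_d) (v : 'I_l -> 'cV[R]_d) :
  (0 < l)%N ->
  is_polytope X ->
  (forall i, Lam i \in unitmx) ->
  (exists N : 'cV[R]_d -> R, is_norm N /\ forall i, (opnorm N (Lam i) < 1%:E)%E) ->
  (forall i, phi Lam b i @` X `<=` relint X) ->
  (forall j, enorm (v j) = 1) ->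
  forall mustar : 'cV[R]_l, W1 X Lam b v mustar ->
  forall (n : nat) (alpha : n.-tuple (label l)), (0 < n)%N ->
  itin X Lam b v mustar alpha ->
  exists c : R, 0 < c /\ exists delta : R, 0 < delta /\
    forall mu : 'cV[R]_l, enorm (mu - mustar) < delta -> enorm (mu - mustar) < 1 ->
      itin X Lam b v mu alpha /\
      (hausdorff (Aalpha X Lam b v mu alpha) (Aalpha X Lam b v mustar alpha)
         <= (c * enorm (mu - mustar))%:E)%E.
Proof.
move=> _ polyX _ _ _ _ mustar W1mustar n alpha n_gt0 itin_mustar.
have [e e0 ballZ] := interior_of_not_boundary itin_mustar (W1mustar n alpha n_gt0).
have [D D0 diamX] := polytope_diam_bound polyX.
pose r := e / 2; have r0 : 0 < r by rewrite divr_gt0.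
have re : r + r = e by rewrite /r; field.
exists (D / r); split; first exact: divr_gt0.
exists r; split => // mu near_mu _.
split; first by apply: ballZ; lra.
apply: hausdorff_le => [a Aa | y Ay].
- rewrite enorm_distC; apply: (edist_Aalpha_shift polyX n_gt0 diamX r0) Aa.
    move=> q near_q; apply: ballZ.
    by have := enormD (q - mu) (mu - mustar); rewrite addrA subrK; lra.
  by rewrite enorm_distC ltW.
- apply: (edist_Aalpha_shift polyX n_gt0 diamX r0 _ (ltW near_mu) Ay).
  by move=> q near_q; apply: ballZ; lra.
Qed.
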